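(* Let $\tau$ be a topology on a set $X$. For each $A \in \tau$ let $d_A : X \times X \to [0,\infty)$ be the characteristic function of the complement of $A\times A$ in $X \times X$, and let $\mathscr{P}_\tau := \{d_A : A \in \tau\}$. Then the topology on $X$ defined by $\mathscr{P}_\tau$, i.e. the topology generated by the family of sets $$U_{d_A,\varepsilon}(x) := \{\xi \in X : d_A(\xi,x) < \varepsilon\}, \quad A \in \tau,\ x \in X,\ \varepsilon \in \mathbb{R},\ \varepsilon > d_A(x,x),$$ coincides with $\tau$.
   Context: A weak pseudo-metric on $X$ is a symmetric map $d: X\times X\to[0,\infty)$ satisfying $d(x_1,x_2)\le d(x_1,x)+d(x,x_2)$ for all $x,x_1,x_2\in X$ and vanishing at at least one point of the diagonal of $X\times X$ (not necessarily on the whole diagonal). For a family $\mathscr{P}$ of such maps, the topology defined by $\mathscr{P}$ is the topology generated (as a subbase) by the sets $U_{d,\varepsilon}(x)=\{\xi\in X: d(\xi,x)<\varepsilon\}$ with $d\in\mathscr{P}$, $x\in X$, and real $\varepsilon>d(x,x)$. *)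

From Stdlib Require Import Reals ClassicalEpsilon.
Open Scope R_scope.

Section Defs.
Variable X : Type.

Definition is_topology (tau : (X -> Prop) -> Prop) : Prop :=
  tau (fun _ => False) /\ tau (fun _ => True) /\
  (forall F : (X -> Prop) -> Prop, (forall U, F U -> tau U) ->
     tau (fun x => exists U, F U /\ U x)) /\
  (forall U V, tau U -> tau V -> tau (fun x => U x /\ V x)).

Definition generated_topology (S : (X -> Prop) -> Prop) : (X -> Prop) -> Prop :=
  fun U => forall T, is_topology T -> (forall V, S V -> T V) -> T U.

Definition U_ball (d : X -> X -> R) (eps : R) (x : X) : X -> Prop :=
  fun xi => d xi x < eps.

Definition pm_subbase (P : (X -> X -> R) -> Prop) : (X -> Prop) -> Prop :=
  fun U => exists d x eps, P d /\ d x x < eps /\ U = U_ball d eps x.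

Definition topology_defined_by (P : (X -> X -> R) -> Prop) : (X -> Prop) -> Prop :=
  generated_topology (pm_subbase P).

Definition d_of (A : X -> Prop) : X -> X -> R :=
  fun x y => if excluded_middle_informative (A x /\ A y) then 0 else 1.

Definition P_of (tau : (X -> Prop) -> Prop) : (X -> X -> R) -> Prop :=
  fun d => exists A, tau A /\ d = d_of A.

End Defs.

(* A ball of [d_A] of radius [eps > d_A(x,x)] is all of [X] when [eps > 1], and is [A]
   itself when [eps <= 1] (then necessarily [x \in A]).  Hence every subbasic set lies in
   [tau]; conversely every [A \in tau] is a subbasic set [U_{d_A,1}(x)] as soon as it
   contains a point [x], and the empty set is the empty union. *)
From Stdlib Require Import Reals Lra FunctionalExtensionality PropExtensionality ClassicalEpsilon.

Section PseudometricTopology.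
Variable X : Type.

Lemma set_ext (A B : X -> Prop) : (forall x, A x <-> B x) -> A = B.
Proof.
  intro H; apply functional_extensionality; intro x.
  apply propositional_extensionality; exact (H x).
Qed.

Lemma generated_topology_le (S T : (X -> Prop) -> Prop) :
  is_topology X T -> (forall V, S V -> T V) ->
  forall U, generated_topology X S U -> T U.
Proof. intros HT HST U HU; exact (HU T HT HST). Qed.

Lemma generated_topology_union (S : (X -> Prop) -> Prop) (U : X -> Prop) :
  (forall x, U x -> exists V, S V /\ V x /\ (forall y, V y -> U y)) ->
  generated_topology X S U.
Proof.
  intros Hcover T [_ [_ [Hunion _]]] HST.
  replace U with (fun x => exists V, (S V /\ forall y, V y -> U y) /\ V x).
  - apply Hunion; intros V [HV _]; exact (HST V HV).
  - apply set_ext; intro x; split.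
    + intros [V [[_ HVU] Vx]]; exact (HVU x Vx).
    + intro Ux; destruct (Hcover x Ux) as [V [HV [Vx HVU]]]; eauto.
Qed.

Lemma U_ball_d_of_full (A : X -> Prop) (eps : R) (x : X) :
  1 < eps -> U_ball X (d_of X A) eps x = fun _ => True.
Proof.
  intro Heps; apply set_ext; intro xi; unfold U_ball, d_of.
  destruct (excluded_middle_informative _); split; auto; lra.
Qed.

Lemma U_ball_d_of_self (A : X -> Prop) (eps : R) (x : X) :
  d_of X A x x < eps -> eps <= 1 -> U_ball X (d_of X A) eps x = A.
Proof.
  unfold d_of; intros Hx Heps.
  destruct (excluded_middle_informative (A x /\ A x)) as [[Ax _] | _]; [| lra].
  apply set_ext; intro xi; unfold U_ball, d_of.
  destruct (excluded_middle_informative (A xi /\ A x)); split; intro; tauto || lra.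
Qed.

Lemma pm_subbase_P_of_open (tau : (X -> Prop) -> Prop) (V : X -> Prop) :
  tau (fun _ => True) -> pm_subbase X (P_of X tau) V -> tau V.
Proof.
  intros HT [d [x [eps [[A [HA ->]] [Hx ->]]]]].
  destruct (Rlt_le_dec 1 eps) as [Heps | Heps].
  - rewrite U_ball_d_of_full; assumption.
  - rewrite U_ball_d_of_self; assumption.
Qed.

Lemma open_pm_subbase (tau : (X -> Prop) -> Prop) (A : X -> Prop) (x : X) :
  tau A -> A x -> pm_subbase X (P_of X tau) A.
Proof.
  intros HA Ax.
  assert (Hx : d_of X A x x < 1).
  { unfold d_of; destruct (excluded_middle_informative (A x /\ A x)); [lra | tauto]. }
  exists (d_of X A), x, 1; split; [exists A; auto | split; [exact Hx |]].
  symmetry; apply U_ball_d_of_self; lra.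
Qed.

End PseudometricTopology.

Theorem theorem4p1 (X : Type) (tau : (X -> Prop) -> Prop) :
  is_topology X tau ->
  forall U : X -> Prop, topology_defined_by X (P_of X tau) U <-> tau U.
Proof.
  intros Htau U; split.
  - apply generated_topology_le; [exact Htau |].
    intro V; apply pm_subbase_P_of_open; apply Htau.
  - intro HU; apply generated_topology_union; intros x Ux.
    exists U; split; [exact (open_pm_subbase X tau U x HU Ux) | auto].
Qed.
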